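(* Let $\mathcal A\in\mathbb C^{n_1\times n_2\times n_3}$ and $\mathcal A^-\in\mathcal A\{1\}$. Then $\mathcal X=\mathcal A^{-,*}=\mathcal A^-\mathcal A\mathcal A^*$ is the unique $\mathcal X\in\mathbb C^{n_2\times n_1\times n_3}$ satisfying $$\mathcal X(\mathcal A^\dagger)^*\mathcal X=\mathcal X,\qquad \mathcal A\mathcal X=\mathcal A\mathcal A^*,\qquad \mathcal X(\mathcal A^\dagger)^*=\mathcal A^-\mathcal A.$$
   Context: Fix a nonsingular matrix $M\in\mathbb C^{n_3\times n_3}$. For $\mathcal C\in\mathbb C^{n_1\times n_2\times n_3}$ let $\widehat{\mathcal C}=\mathcal C\times_3M$, i.e. $\widehat{\mathcal C}_{ijk}=\sum_{l=1}^{n_3}M_{kl}\mathcal C_{ijl}$, and let $\widehat{\mathcal C}^{(i)}$ denote its $i$-th frontal slice. The M-product $\mathcal C\star_M\mathcal D$ of $\mathcal C\in\mathbb C^{n_1\times n_2\times n_3}$ and $\mathcal D\in\mathbb C^{n_2\times l\times n_3}$ is the unique tensor with $\widehat{\mathcal C\star_M\mathcal D}^{(i)}=\widehat{\mathcal C}^{(i)}\widehat{\mathcal D}^{(i)}$ for all $i\in[n_3]$. Juxtaposition of tensors denotes the M-product. The conjugate transpose $\mathcal A^*$ is defined by $\widehat{\mathcal A^*}^{(i)}=(\widehat{\mathcal A}^{(i)})^*$. The Moore–Penrose inverse $\mathcal A^\dagger$ is the unique $\mathcal W$ satisfying $\mathcal A\mathcal W\mathcal A=\mathcal A$, $\mathcal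 W\mathcal A\mathcal W=\mathcal W$, $(\mathcal A\mathcal W)^*=\mathcal A\mathcal W$, $(\mathcal W\mathcal A)^*=\mathcal W\mathcal A$. $\mathcal A\{1\}$ is the set of all $\mathcal W$ with $\mathcal A\mathcal W\mathcal A=\mathcal A$. The 1-Star inverse associated with $\mathcal A^-$ is $\mathcal A^{-,*}=\mathcal A^-\mathcal A\mathcal A^*$. *)

From mathcomp Require Import all_boot all_order all_algebra.
Set Implicit Arguments. Unset Strict Implicit. Unset Printing Implicit Defensive.
Import Order.TTheory GRing.Theory Num.Theory.
Local Open Scope ring_scope.

(* Third-order tensors in C^{n1 x n2 x n3}, stored by frontal slices:
   A k is the k-th frontal slice (an n1 x n2 matrix), A k i j = A_{ijk}. *)
Definition tensor (C : Type) (n1 n2 n3 : nat) := {ffun 'I_n3 -> 'M[C]_(n1, n2)}.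

Definition tmode3 (C : numClosedFieldType) (n1 n2 n3 : nat)
  (P : 'M[C]_n3) (A : tensor C n1 n2 n3) : tensor C n1 n2 n3 :=
  [ffun k => \sum_(l < n3) P k l *: A l].

Definition ctmx (C : numClosedFieldType) m n (B : 'M[C]_(m, n)) : 'M[C]_(n, m) :=
  (map_mx Num.conj B)^T.

(* M-product: the unique tensor whose hat-slices are the products of the
   hat-slices (hat = x_3 M); for nonsingular M it is obtained by x_3 M^{-1}. *)
Definition mprod (C : numClosedFieldType) (n1 n2 l n3 : nat) (M : 'M[C]_n3)
  (A : tensor C n1 n2 n3) (B : tensor C n2 l n3) : tensor C n1 l n3 :=
  tmode3 (invmx M) [ffun k => tmode3 M A k *m tmode3 M B k].

Definition tctr (C : numClosedFieldType) (n1 n2 n3 : nat) (M : 'M[C]_n3)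
  (A : tensor C n1 n2 n3) : tensor C n2 n1 n3 :=
  tmode3 (invmx M) [ffun k => ctmx (tmode3 M A k)].

Definition is_MP_inverse (C : numClosedFieldType) (n1 n2 n3 : nat) (M : 'M[C]_n3)
  (A : tensor C n1 n2 n3) (W : tensor C n2 n1 n3) : Prop :=
  [/\ mprod M (mprod M A W) A = A,
      mprod M (mprod M W A) W = W,
      tctr M (mprod M A W) = mprod M A W &
      tctr M (mprod M W A) = mprod M W A].

Definition is_inner_inverse (C : numClosedFieldType) (n1 n2 n3 : nat) (M : 'M[C]_n3)
  (A : tensor C n1 n2 n3) (W : tensor C n2 n1 n3) : Prop :=
  mprod M (mprod M A W) A = A.

Definition one_star (C : numClosedFieldType) (n1 n2 n3 : nat) (M : 'M[C]_n3)
  (A : tensor C n1 n2 n3) (Am : tensor C n2 n1 n3) : tensor C n2 n1 n3 :=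
  mprod M (mprod M Am A) (tctr M A).

From mathcomp Require Import all_boot all_order all_algebra.

Set Implicit Arguments.
Unset Strict Implicit.
Unset Printing Implicit Defensive.

Import GRing.Theory Num.Theory.
Local Open Scope ring_scope.

(* Transforming by x_3 M turns the M-product into slicewise matrix
   multiplication and the tensor conjugate transpose into slicewise conjugate
   transposition, and it is injective when M is nonsingular.  So the theorem
   is the corresponding statement about the slices: if a g a = a, a d a = a and
   d a is Hermitian, then x := g a a^* satisfies x d^* = g a (a d) a = g a,
   whence x d^* x = g a x = x and a x = a a^*; conversely these equations force
   x = (x d^* ) x = g a x = g a a^*. *)

Lemma ctmxM (C : numClosedFieldType) m n p (a : 'M[C]_(m, n)) (b : 'M[C]_(n, p)) :
  ctmx (a *m b) = ctmx b *m ctmx a.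
Proof. by rewrite /ctmx map_mxM trmx_mul. Qed.

Section OneStarMatrix.

Variables (C : numClosedFieldType) (m n : nat).
Variables (a : 'M[C]_(m, n)) (g d : 'M[C]_(n, m)).
Hypotheses (agaE : a *m g *m a = a) (adaE : a *m d *m a = a).
Hypothesis da_herm : ctmx (d *m a) = d *m a.

Lemma one_star_mx_mul_ctmx : g *m a *m ctmx a *m ctmx d = g *m a.
Proof. by rewrite -mulmxA -ctmxM da_herm -!mulmxA (mulmxA a) adaE. Qed.

Lemma one_star_mxP (x : 'M[C]_(n, m)) :
  [/\ x *m ctmx d *m x = x, a *m x = a *m ctmx a & x *m ctmx d = g *m a]
  <-> x = g *m a *m ctmx a.
Proof.
split=> [[xdxE axE xdE] | ->].
  by rewrite -xdxE xdE -mulmxA axE mulmxA.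
rewrite one_star_mx_mul_ctmx; split=> //.
  by rewrite !mulmxA -(mulmxA g) -(mulmxA g (a *m g)) agaE.
by rewrite !mulmxA agaE.
Qed.

End OneStarMatrix.

Section Mode3.

Variables (C : numClosedFieldType) (n3 : nat) (M : 'M[C]_n3).

Lemma tmode3M n1 n2 (P Q : 'M[C]_n3) (A : tensor C n1 n2 n3) :
  tmode3 P (tmode3 Q A) = tmode3 (P *m Q) A.
Proof.
apply/ffunP => k; rewrite !ffunE.
under eq_bigr => l _ do rewrite ffunE scaler_sumr.
rewrite exchange_big /=; apply: eq_bigr => j _.
by rewrite mxE scaler_suml; apply: eq_bigr => l _; rewrite scalerA.
Qed.

Lemma tmode31 n1 n2 (A : tensor C n1 n2 n3) : tmode3 1%:M A = A.
Proof.
apply/ffunP => k; rewrite ffunE (bigD1 k) //= big1 ?addr0 ?mxE ?eqxx ?scale1r //.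
by move=> l /negPf neq_lk; rewrite mxE eq_sym neq_lk scale0r.
Qed.

Hypothesis M_unit : M \in unitmx.

Lemma tmode3K n1 n2 (A : tensor C n1 n2 n3) : tmode3 M (tmode3 (invmx M) A) = A.
Proof. by rewrite tmode3M mulmxV // tmode31. Qed.

Lemma tensorP n1 n2 (X Y : tensor C n1 n2 n3) :
  X = Y <-> forall k, tmode3 M X k = tmode3 M Y k.
Proof.
split=> [-> // | eq_hat].
have /(congr1 (tmode3 (invmx M))) : tmode3 M X = tmode3 M Y by apply/ffunP.
by rewrite !tmode3M mulVmx // !tmode31.
Qed.

Lemma tmode3_mprod n1 n2 l (A : tensor C n1 n2 n3) (B : tensor C n2 l n3) k :
  tmode3 M (mprod M A B) k = tmode3 M A k *m tmode3 M B k.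
Proof. by rewrite /mprod tmode3K ffunE. Qed.

Lemma tmode3_tctr n1 n2 (A : tensor C n1 n2 n3) k :
  tmode3 M (tctr M A) k = ctmx (tmode3 M A k).
Proof. by rewrite /tctr tmode3K ffunE. Qed.

Lemma tmode3_one_star n1 n2 (A : tensor C n1 n2 n3) (G : tensor C n2 n1 n3) k :
  tmode3 M (one_star M A G) k = tmode3 M G k *m tmode3 M A k *m ctmx (tmode3 M A k).
Proof. by rewrite /one_star !tmode3_mprod tmode3_tctr. Qed.

Lemma tmode3_inner_inverse n1 n2 (A : tensor C n1 n2 n3) (G : tensor C n2 n1 n3) :
  is_inner_inverse M A G ->
  forall k, tmode3 M A k *m tmode3 M G k *m tmode3 M A k = tmode3 M A k.
Proof. by move=> AGA k; rewrite -!tmode3_mprod AGA. Qed.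

Lemma tmode3_MP_inverse_herm n1 n2 (A : tensor C n1 n2 n3) (D : tensor C n2 n1 n3) :
  is_MP_inverse M A D ->
  forall k, ctmx (tmode3 M D k *m tmode3 M A k) = tmode3 M D k *m tmode3 M A k.
Proof. by case=> _ _ _ DA_herm k; rewrite -!tmode3_mprod -tmode3_tctr DA_herm. Qed.

End Mode3.

Lemma MP_inverse_inner (C : numClosedFieldType) n1 n2 n3 (M : 'M[C]_n3)
  (A : tensor C n1 n2 n3) (D : tensor C n2 n1 n3) :
  is_MP_inverse M A D -> is_inner_inverse M A D.
Proof. by case. Qed.

Theorem theorem3p10 (C : numClosedFieldType) (n1 n2 n3 : nat) (M : 'M[C]_n3)
  (hM : M \in unitmx)
  (A : tensor C n1 n2 n3) (Am : tensor C n2 n1 n3)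
  (hAm : is_inner_inverse M A Am)
  (Ad : tensor C n2 n1 n3) (hAd : is_MP_inverse M A Ad) :
  forall X : tensor C n2 n1 n3,
    [/\ mprod M (mprod M X (tctr M Ad)) X = X,
        mprod M A X = mprod M A (tctr M A) &
        mprod M X (tctr M Ad) = mprod M Am A]
    <-> X = one_star M A Am.
Proof.
move=> X.
have sliceP k := one_star_mxP (tmode3_inner_inverse hM hAm k)
  (tmode3_inner_inverse hM (MP_inverse_inner hAd) k)
  (tmode3_MP_inverse_herm hM hAd k) (tmode3 M X k).
split=> [[/(tensorP hM) XAdX /(tensorP hM) AX /(tensorP hM) XAd] | /(tensorP hM) X_hat].
  apply/(tensorP hM) => k; rewrite tmode3_one_star //; apply/sliceP.
  by move: (XAdX k) (AX k) (XAd k); rewrite !tmode3_mprod ?tmode3_tctr.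
have {}X_hat k := proj2 (sliceP k) (etrans (X_hat k) (tmode3_one_star hM A Am k)).
by split; apply/(tensorP hM) => k; rewrite !tmode3_mprod ?tmode3_tctr //; case: (X_hat k).
Qed.
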